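(* Let $P_1$ be the uniform distribution on $[0,\frac12]$, let $P_2$ be the uniform distribution on $[\frac12,1]$, and let $P=\frac34P_1+\frac14P_2$. Then the set $\{\frac14,\frac34\}$ forms an optimal set of two-means for $P$, with quantization error $V_2=\frac1{48}$.
   Context: For a finite set $\alpha\subset\mathbb R$, $V(P;\alpha)=\int\min_{a\in\alpha}(x-a)^2\,dP(x)$; $V_n=\inf\{V(P;\alpha):\mathrm{card}(\alpha)\le n\}$; an optimal set of $n$-means is a set $\alpha$ with $\mathrm{card}(\alpha)\le n$ and $V(P;\alpha)=V_n$. *)

From HB Require Import structures.
From mathcomp Require Import all_boot all_order all_algebra finmap.
From mathcomp Require Import all_classical all_reals all_analysis.
Set Implicit Arguments. Unset Strict Implicit. Unset Printing Implicit Defensive.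
Import Order.TTheory GRing.Theory Num.Theory.
Local Open Scope classical_set_scope.
Local Open Scope ring_scope.
Local Open Scope fset_scope.

Section quantization.
Context {R : realType}.

(* min_{a in alpha} (x - a)^2, as an extended real (+oo for the empty set) *)
Definition min_sqdist (alpha : {fset R}) (x : R) : \bar R :=
  \big[mine/+oo%E]_(a <- alpha) (((x - a) ^+ 2)%:E).

Definition Vq (P : {measure set (measurableTypeR R) -> \bar R}) (alpha : {fset R}) : \bar R :=
  (\int[P]_x min_sqdist alpha x)%E.

Definition Vn (P : {measure set (measurableTypeR R) -> \bar R}) (n : nat) : \bar R :=
  ereal_inf [set Vq P alpha | alpha in [set alpha : {fset R} | (#|` alpha| <= n)%N]].

Definition optimal_set (P : {measure set (measurableTypeR R) -> \bar R}) (n : nat) (alpha : {fset R}) : Prop :=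
  (#|` alpha| <= n)%N /\ Vq P alpha = Vn P n.

Lemma lt_0_half : (0 : R) < 1/2. Proof. by rewrite divr_gt0 ?ltr01 ?ltr0n. Qed.
Lemma lt_half_1 : (1/2 : R) < 1.
Proof. by rewrite ltr_pdivrMr ?ltr0n // mul1r ltr1n. Qed.

Definition P1 : {measure set (measurableTypeR R) -> \bar R} := uniform_prob lt_0_half.
Definition P2 : {measure set (measurableTypeR R) -> \bar R} := uniform_prob lt_half_1.

Definition Pmix : {measure set (measurableTypeR R) -> \bar R} :=
  measure_add (mscale ((3/4 : R)%:nng) P1) (mscale ((1/4 : R)%:nng) P2).
End quantization.

(* For centres a <= b the integrand min((x - a)^2, (x - b)^2) is (x - a)^2 left of the
   midpoint t = (a + b)/2 and (x - b)^2 right of it.  As P has density 3/2 on [0, 1/2] and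
   1/2 on [1/2, 1], the cost of {a, b} is an explicit polynomial in a, b and the point s
   at which t, clamped to the half where it lies, splits that half.  Times a positive
   factor, its excess over 1/48 is a sum of squares vanishing at a = 1/4, b = 3/4.
   A set of at most two points costs at least as much as some pair {a, b} (with a = b
   for a singleton; the empty set costs +oo). *)

From HB Require Import structures.
From mathcomp Require Import all_boot all_order all_algebra finmap.
From mathcomp Require Import all_classical all_reals all_analysis.
From mathcomp Require Import measurable_realfun lra ring.
Import Order.TTheory GRing.Theory Num.Theory numFieldNormedType.Exports.
Local Open Scope ring_scope.
Local Open Scope fset_scope.

Lemma optimal_set_lbound (R : realType) (P : {measure set (measurableTypeR R) -> \bar R})
    (n : nat) (alpha : {fset R}) (v : \bar R) :
  (#|` alpha| <= n)%N -> Vq P alpha = v ->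
  (forall beta : {fset R}, (#|` beta| <= n)%N -> (v <= Vq P beta)%E) ->
  optimal_set P n alpha /\ Vn P n = v.
Proof.
move=> card_alpha Valpha v_lb.
have Vn_v : Vn P n = v.
  apply/eqP; rewrite eq_le; apply/andP; split.
  - by rewrite -Valpha; apply: ereal_inf_lbound; exists alpha.
  - by apply: le_ereal_inf_tmp => _ [beta card_beta <-]; exact: v_lb.
by split; [split; rewrite // Valpha Vn_v|].
Qed.

Section clamp.
Context {R : realDomainType}.

Definition clamp (u v t : R) : R := Num.min (Num.max t u) v.

Lemma clamp_itv (u v t : R) : u <= v -> u <= clamp u v t <= v.
Proof. by move=> uv; rewrite /clamp le_min le_max lexx orbT uv ge_min lexx orbT. Qed.

Lemma clamp_ltl (u v t : R) : u < clamp u v t -> clamp u v t <= t.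
Proof.
rewrite /clamp lt_min lt_max ltxx orbF => /andP[ut _].
by rewrite ge_min ge_max lexx (ltW ut).
Qed.

Lemma clamp_ltr (u v t : R) : clamp u v t < v -> t <= clamp u v t.
Proof.
rewrite /clamp gt_min ltxx orbF gt_max => /andP[tv _].
by rewrite le_min le_max lexx (ltW tv).
Qed.

Lemma clamp_l (u v t : R) : u <= v -> t <= u -> clamp u v t = u.
Proof. by move=> uv tu; rewrite /clamp max_r ?min_l. Qed.

Lemma clamp_r (u v t : R) : u <= v -> v <= t -> clamp u v t = v.
Proof. by move=> uv vt; rewrite /clamp max_l ?min_r // (le_trans uv). Qed.

End clamp.

Section quantization_two_means.
Context {R : realType}.
Local Open Scope classical_set_scope.
Local Open Scope ring_scope.

Lemma is_derive_cube_shift (c x : R) :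
  is_derive x 1 (fun y : R => (y - c) ^+ 3 / 3) ((x - c) ^+ 2).
Proof.
apply: trigger_derive; rewrite /GRing.scale /= !subr0 !mulr0 ?addr0 !mulr1.
by field.
Qed.

Lemma derivable_cube_shift (c x : R) :
  derivable (fun y : R => (y - c) ^+ 3 / 3) x 1.
Proof. by apply: ex_derive; exact: is_derive_cube_shift. Qed.

Lemma continuous_cube_shift (c : R) : continuous (fun y : R => (y - c) ^+ 3 / 3).
Proof.
move=> x; apply: differentiable_continuous; rewrite -derivable1_diffP.
exact: derivable_cube_shift.
Qed.

Lemma continuous_sqr_shift (c : R) : continuous (fun y : R => (y - c) ^+ 2).
Proof.
move=> x; apply: differentiable_continuous; rewrite -derivable1_diffP.
by apply: ex_derive; apply: trigger_derive.
Qed.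

Lemma measurable_sqr_shift (c : R) (D : set R) :
  measurable_fun D (fun y : R => (y - c) ^+ 2).
Proof.
apply: measurable_funTS; exact: continuous_measurable_fun (continuous_sqr_shift c).
Qed.

Lemma integral_itv_sqr_shift (c u v : R) (b0 b1 : bool) : u <= v ->
  (\int[lebesgue_measure]_(x in [set` Interval (BSide b0 u) (BSide b1 v)])
     ((x - c) ^+ 2)%:E = (((v - c) ^+ 3 - (u - c) ^+ 3) / 3)%:E)%E.
Proof.
have mf : measurable_fun setT (fun y : R => ((y - c) ^+ 2)%:E).
  by apply/measurable_EFinP; exact: measurable_sqr_shift.
rewrite le_eqVlt => /predU1P[<-|uv].
  rewrite integral_itv_bndoo; last exact: measurable_funTS.
  by rewrite set_itvoo0 integral_set0 subrr mul0r.
rewrite integral_itv_bndoo; last exact: measurable_funTS.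
rewrite -(@integral_itv_bndoo _ _ _ _ true false); last exact: measurable_funTS.
rewrite (@continuous_FTC2 _ _ (fun y : R => (y - c) ^+ 3 / 3)) //.
- by rewrite -EFinB mulrBl.
- by apply: continuous_in_subspaceT => x _; exact: continuous_sqr_shift.
- split.
  + by move=> x _; exact: derivable_cube_shift.
  + exact/cvg_at_right_filter/continuous_cube_shift.
  + exact/cvg_at_left_filter/continuous_cube_shift.
- by move=> x _; rewrite derive1E; exact/derive_val/is_derive_cube_shift.
Qed.

Definition min_sqdist2 (a b x : R) : R := Num.min ((x - a) ^+ 2) ((x - b) ^+ 2).

Lemma min_sqdist2C (a b x : R) : min_sqdist2 a b x = min_sqdist2 b a x.
Proof. exact: minC. Qed.

Lemma min_sqdist2_ge0 (a b x : R) : 0 <= min_sqdist2 a b x.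
Proof. by rewrite le_min !sqr_ge0. Qed.

Lemma measurable_min_sqdist2 (a b : R) (D : set R) :
  measurable_fun D (fun x => (min_sqdist2 a b x)%:E).
Proof.
by apply/measurable_EFinP; apply: measurable_minr; exact: measurable_sqr_shift.
Qed.

Lemma min_sqdist2_l (a b x : R) : a <= b -> x <= (a + b) / 2 ->
  min_sqdist2 a b x = (x - a) ^+ 2.
Proof. by move=> ab xt; apply: min_l; nra. Qed.

Lemma min_sqdist2_r (a b x : R) : a <= b -> (a + b) / 2 <= x ->
  min_sqdist2 a b x = (x - b) ^+ 2.
Proof. by move=> ab xt; apply: min_r; nra. Qed.

Definition voronoi_cost (a b u s v : R) : R :=
  ((s - a) ^+ 3 - (u - a) ^+ 3) / 3 + ((v - b) ^+ 3 - (s - b) ^+ 3) / 3.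

Lemma integral_itv_min_sqdist2 (a b u v : R) (b0 b1 : bool) : a <= b -> u <= v ->
  (\int[lebesgue_measure]_(x in [set` Interval (BSide b0 u) (BSide b1 v)])
     (min_sqdist2 a b x)%:E =
   (voronoi_cost a b u (clamp u v ((a + b) / 2)) v)%:E)%E.
Proof.
move=> ab uv; set s := clamp u v _.
have /andP[us sv] : u <= s <= v by exact: clamp_itv.
have mf := measurable_min_sqdist2 a b.
(* On open pieces the cell boundary s is excluded, which avoids the cases s = u and s = v. *)
rewrite integral_itv_bndoo // -(@integral_itv_bndoo _ _ _ _ true false) //.
rewrite (@itv_bndbnd_setU _ _ _ (BRight s)) ?bnd_simp //.
rewrite ge0_integral_setU //; first last.
- rewrite disj_set2E; apply/eqP/seteqP; split => x //=.
  by rewrite !in_itv /= => -[/andP[_ xs] /andP[sx _]]; lra.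
- by move=> x _; rewrite lee_fin min_sqdist2_ge0.
- exact: mf.
rewrite [X in (X + _)%E]integral_itv_bndoo; last exact: mf.
rewrite [X in (_ + X)%E]integral_itv_bndoo; last exact: mf.
rewrite /voronoi_cost EFinD -(integral_itv_sqr_shift a u s false true) //.
rewrite -(integral_itv_sqr_shift b s v false true) //.
congr (_ + _)%E; apply: eq_integral => x; rewrite inE /= in_itv /=.
- move=> /andP[ux xs]; rewrite min_sqdist2_l //.
  by apply: (le_trans (ltW xs)); apply: clamp_ltl; exact: lt_trans ux xs.
- move=> /andP[sx xv]; rewrite min_sqdist2_r //.
  by apply: (le_trans _ (ltW sx)); apply: clamp_ltr; exact: lt_trans sx xv.
Qed.

Lemma integral_Pmix (f : R -> \bar R) :
  measurable_fun setT f -> (forall x, 0 <= f x)%E ->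
  (\int[Pmix]_x f x =
     (3/2 : R)%:E * \int[lebesgue_measure]_(x in `[0%R, (1/2)%R]) f x
   + (1/2 : R)%:E * \int[lebesgue_measure]_(x in `[(1/2)%R, 1%R]) f x)%E.
Proof.
move=> mf f0.
rewrite /Pmix ge0_integral_measure_add // !ge0_integral_mscale //.
rewrite /P1 /P2 !integral_uniform //.
by rewrite /= !muleA -!EFinM; congr (_ * _ + _ * _)%E; congr EFin; field.
Qed.

(* [s1] and [s2] are the cell boundaries inside [0, 1/2] and [1/2, 1]. *)
Definition Pmix_cost (a b s1 s2 : R) : R :=
  3/2 * voronoi_cost a b 0 s1 (1/2) + 1/2 * voronoi_cost a b (1/2) s2 1.

Lemma integral_Pmix_min_sqdist2 (a b : R) : a <= b ->
  (\int[Pmix]_x (min_sqdist2 a b x)%:E =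
   (Pmix_cost a b (clamp 0 (1/2) ((a + b) / 2)) (clamp (1/2) 1 ((a + b) / 2)))%:E)%E.
Proof.
move=> ab; rewrite integral_Pmix; first last.
- by move=> x; rewrite lee_fin min_sqdist2_ge0.
- exact: measurable_min_sqdist2.
by rewrite !integral_itv_min_sqdist2 //; lra.
Qed.

Lemma Pmix_cost_left_ge (a b s : R) : 0 <= s <= 1/2 -> 1/48 <= Pmix_cost a b s (1/2).
Proof.
move=> /andP[s0 s1]; set m := 1 - 3/2 * s.
have m_gt0 : 0 < m by rewrite /m; lra.
have sos : m * (Pmix_cost a b s (1/2) - 1/48) =
    3/2 * s * m * (a - s/2) ^+ 2 + (m * b - (3/8 - 3/4 * s ^+ 2)) ^+ 2
    + 3/64 * (1 - 2 * s) ^+ 3.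
  by rewrite /Pmix_cost /voronoi_cost /m; field.
have : 0 <= m * (Pmix_cost a b s (1/2) - 1/48).
  rewrite sos; apply: addr_ge0; [apply: addr_ge0|].
  - by apply: mulr_ge0; [apply: mulr_ge0; [apply: mulr_ge0; lra|lra]|exact: sqr_ge0].
  - exact: sqr_ge0.
  - by apply: mulr_ge0; [lra|apply: exprn_ge0; lra].
by rewrite pmulr_rge0 // subr_ge0.
Qed.

Lemma Pmix_cost_right_ge (a b s : R) : 1/2 <= s <= 1 -> 1/48 <= Pmix_cost a b (1/2) s.
Proof.
move=> /andP[s0 s1]; set m := (1 + s) / 2.
have m_gt0 : 0 < m by rewrite /m; lra.
have sos : m * (Pmix_cost a b (1/2) s - 1/48) =
    m * (1/2) * (1 - s) * (b - (1 + s) / 2) ^+ 2 + (m * a - (1/8 + s ^+ 2 / 4)) ^+ 2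
    + (1 - 2 * s) ^+ 2 * (1 + 2 * s) / 64.
  by rewrite /Pmix_cost /voronoi_cost /m; field.
have : 0 <= m * (Pmix_cost a b (1/2) s - 1/48).
  rewrite sos; apply: addr_ge0; [apply: addr_ge0|].
  - by apply: mulr_ge0; [apply: mulr_ge0; [apply: mulr_ge0; lra|lra]|exact: sqr_ge0].
  - exact: sqr_ge0.
  - by apply: mulr_ge0; [apply: mulr_ge0; [exact: sqr_ge0|lra]|lra].
by rewrite pmulr_rge0 // subr_ge0.
Qed.

Lemma Pmix_min_sqdist2_ge (a b : R) :
  ((1/48 : R)%:E <= \int[Pmix]_x (min_sqdist2 a b x)%:E)%E.
Proof.
wlog ab : a b / a <= b.
  move=> wlog_ab; have [/wlog_ab //|/ltW ba] := leP a b.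
  by under eq_fun do rewrite min_sqdist2C; exact: wlog_ab.
rewrite integral_Pmix_min_sqdist2 // lee_fin.
have [t_lt|t_ge] := ltP ((a + b) / 2) (1/2).
- rewrite [clamp (1/2) 1 _]clamp_l; [|lra|lra].
  by apply: Pmix_cost_left_ge; apply: clamp_itv; lra.
- rewrite [clamp 0 (1/2) _]clamp_r; [|lra|lra].
  by apply: Pmix_cost_right_ge; apply: clamp_itv; lra.
Qed.

Lemma Pmix_min_sqdist2_opt :
  (\int[Pmix]_x (min_sqdist2 (1/4) (3/4) x)%:E = (1/48 : R)%:E)%E.
Proof.
have mid : (1/4 + 3/4) / 2 = 1/2 :> R by field.
rewrite integral_Pmix_min_sqdist2; last lra.
rewrite mid [clamp 0 (1/2) _]clamp_r; [|lra|lra].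
rewrite [clamp (1/2) 1 _]clamp_l; [|lra|lra].
by rewrite /Pmix_cost /voronoi_cost; congr EFin; field.
Qed.

Lemma measurable_min_sqdist (alpha : {fset R}) : measurable_fun setT (min_sqdist alpha).
Proof.
rewrite /min_sqdist; elim: (enum_fset alpha) => [|a l IH].
  by under eq_fun do rewrite big_nil; exact: measurable_cst.
under eq_fun do rewrite big_cons; apply: measurable_mine => //.
by apply/measurable_EFinP; exact: measurable_sqr_shift.
Qed.

Lemma min_sqdist_fset2 (a b x : R) : a != b ->
  min_sqdist [fset a; b] x = (min_sqdist2 a b x)%:E.
Proof.
move=> ab; rewrite /min_sqdist big_fsetU1 /= ?big_seq_fset1 ?EFin_min //.
by rewrite in_fset1.
Qed.

Lemma min_sqdist_card_le2 (alpha : {fset R}) : (#|` alpha| <= 2)%N ->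
  exists a b, forall x, ((min_sqdist2 a b x)%:E <= min_sqdist alpha x)%E.
Proof.
rewrite /min_sqdist; case: (enum_fset alpha) => [|a [|b [|? ?]]] //= _.
- by exists 0, 0 => x; rewrite big_nil leey.
- by exists a, a => x; rewrite big_cons big_nil miney /min_sqdist2 minxx.
- by exists a, b => x; rewrite !big_cons big_nil miney EFin_min.
Qed.

Lemma Vq_Pmix_ge (alpha : {fset R}) : (#|` alpha| <= 2)%N ->
  ((1/48 : R)%:E <= Vq Pmix alpha)%E.
Proof.
move=> /min_sqdist_card_le2[a [b dominated]].
apply: le_trans (Pmix_min_sqdist2_ge a b) _.
apply: ge0_le_integral => //.
- by move=> x _; rewrite lee_fin min_sqdist2_ge0.
- exact: measurable_min_sqdist2.
- exact: measurable_min_sqdist.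
Qed.

Lemma Vq_Pmix_opt : Vq Pmix [fset (1/4 : R); 3/4] = (1/48 : R)%:E.
Proof.
rewrite /Vq -Pmix_min_sqdist2_opt; apply: eq_integral => x _.
by rewrite min_sqdist_fset2 //; apply/eqP; lra.
Qed.

End quantization_two_means.

Theorem lemma4p4 (R : realType) :
  optimal_set (@Pmix R) 2 [fset (1/4 : R); 3/4] /\
  Vn (@Pmix R) 2 = ((1/48 : R)%:E)%E.
Proof.
apply: optimal_set_lbound; [|exact: Vq_Pmix_opt|exact: Vq_Pmix_ge].
by rewrite cardfs2; case: (_ != _).
Qed.
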